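(* Let $\mathcal X$ be a real normed space and $\mathcal Y$ a normed space. Let $f:\mathcal X\to\mathcal Y$ be a mapping such that $\|f(x+y)-f(x-y)\|\le\varepsilon$ for some $\varepsilon>0$ and for all $x,y\in\mathcal X$ with $x\perp y$. Then there is an orthogonally constant mapping $c:\mathcal X\to\mathcal Y$ such that $\|f(x)-c(x)\|\le\varepsilon$ for all $x\in\mathcal X$.
   Context: For $x,y$ in a real normed space $\mathcal X$, isosceles orthogonality is defined by $x\perp y$ if and only if $\|x+y\|=\|x-y\|$. A mapping $c:\mathcal X\to\mathcal Y$ is called orthogonally constant if $c(x+y)=c(x-y)$ for all $x,y\in\mathcal X$ with $x\perp y$. *)

From HB Require Import structures.
From mathcomp Require Import all_boot all_order all_algebra.
From mathcomp Require Import all_classical all_reals all_analysis.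
Set Implicit Arguments. Unset Strict Implicit. Unset Printing Implicit Defensive.
Import Order.TTheory GRing.Theory Num.Theory.
Local Open Scope ring_scope.

Definition iso_orth (R : realType) (X : normedModType R) (x y : X) : Prop :=
  `|x + y| = `|x - y|.

Definition orth_const (R : realType) (X : normedModType R) (T : Type)
  (c : X -> T) : Prop :=
  forall x y : X, iso_orth x y -> c (x + y) = c (x - y).

From HB Require Import structures.
From mathcomp Require Import all_boot all_order all_algebra.
From mathcomp Require Import all_classical all_reals all_analysis.
Import Order.TTheory GRing.Theory Num.Theory.
Local Open Scope ring_scope.

(* Two vectors u, v of equal norm are (u + v)/2 +- (u - v)/2, and these halves
   are isosceles orthogonal; hence f varies by at most eps on every sphere
   centred at 0.  Choosing one point on each sphere and evaluating f there gives
   a map c that depends only on the norm, so it is orthogonally constant, and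
   it is eps-close to f. *)

Section IsoscelesOrthogonality.
Variables (R : realType) (X : normedModType R).
Implicit Types u v x y : X.

Lemma halfDB_addE u v : 2^-1 *: (u + v) + 2^-1 *: (u - v) = u :> X.
Proof.
rewrite -scalerDr addrACA subrr addr0 -mulr2n -scalerMnr scalerMnl -mulr_natr.
by rewrite mulVf ?scale1r // pnatr_eq0.
Qed.

Lemma halfDB_subE u v : 2^-1 *: (u + v) - 2^-1 *: (u - v) = v :> X.
Proof.
rewrite -scalerBr opprB addrC addrA subrK -mulr2n -scalerMnr scalerMnl -mulr_natr.
by rewrite mulVf ?scale1r // pnatr_eq0.
Qed.

Lemma iso_orth_halfDB u v :
  iso_orth (2^-1 *: (u + v)) (2^-1 *: (u - v)) <-> `|u| = `|v|.
Proof. by rewrite /iso_orth halfDB_addE halfDB_subE. Qed.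

Lemma orth_const_normr (T : Type) (c : X -> T) :
  (forall x y, `|x| = `|y| -> c x = c y) -> orth_const c.
Proof. by move=> cN x y; apply: cN. Qed.

Definition sphere_rep x : X := xget 0 [set y : X | `|y| = `|x|].

Lemma normr_sphere_rep x : `|sphere_rep x| = `|x|.
Proof.
by rewrite /sphere_rep; case: xgetP => [y -> //|/(_ x)/(_ erefl)].
Qed.

Lemma sphere_rep_normr x y : `|x| = `|y| -> sphere_rep x = sphere_rep y.
Proof. by rewrite /sphere_rep => ->. Qed.

End IsoscelesOrthogonality.

Lemma sphere_dist_le {R : realType} {X Y : normedModType R} {f : X -> Y}
    {eps : R} :
    (forall x y : X, iso_orth x y -> `|f (x + y) - f (x - y)| <= eps) ->
  forall u v : X, `|u| = `|v| -> `|f u - f v| <= eps.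
Proof.
move=> hf u v /iso_orth_halfDB /hf.
by rewrite halfDB_addE halfDB_subE.
Qed.

Theorem proposition2p4 (R : realType) (X Y : normedModType R) (f : X -> Y)
  (eps : R) (heps : 0 < eps)
  (hf : forall x y : X, iso_orth x y -> `|f (x + y) - f (x - y)| <= eps) :
  exists c : X -> Y, orth_const c /\ (forall x : X, `|f x - c x| <= eps).
Proof.
exists (f \o @sphere_rep R X); split.
  by apply: orth_const_normr => x y /sphere_rep_normr /= ->.
by move=> x /=; apply: (sphere_dist_le hf); rewrite normr_sphere_rep.
Qed.
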